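(* For any configuration $\mathcal{C}$ of $d$ doors there is a knock sequence $\pi$ such that $\mathbb{T}_{\mathcal{C}}(\pi)\le\mathbb{T}_{\mathcal{C}}(\pi')$ for every knock sequence $\pi'$.
   Context: Dependent doors model. Fix an integer $d\ge 2$ and doors $1,\dots,d$, all initially closed; once a door opens it stays open forever. A configuration $\mathcal{C}$ specifies for each door $i$ a function $\phi_i^{\mathcal{C}}$ mapping every finite nonempty sequence $(X_1,\dots,X_n)$ of subsets of $\{1,\dots,i-1\}$ to $[0,1]$: $\phi_i^{\mathcal{C}}(X_1,\dots,X_n)$ is the probability that door $i$ has opened during $n$ knocks on it, where $X_j$ is the set of open doors among $\{1,\dots,i-1\}$ at the time of the $j$-th knock on door $i$ (so a closed door $i$ opens at its $n$-th knock with conditional probability $(\phi_i(X_1..X_n)-\phi_i(X_1..X_{n-1}))/(1-\phi_i(X_1..X_{n-1}))$, with $\phi_i$ of the empty sequence equal to $0$). Configurations are assumed monotone ($\phi_i(X')\le\phi_i(X)$ whenever $X'$ is a, not necessarily consecutive, subsequence of $X$) and positively correlated ($\phi_i(X'_1,\dots,X'_n)\le\phi_i(X_1,\dots,X_n)$ whenever $X'_j\subseteq X_j$ for all $j$). The fundamental distribution of door $i$ is $p_i(n)=1-\phi_i(\{1,\dots,i-1\}^n)$ ($p_i(0)=1$), and $E_i=\sum_{n\ge0}p_i(n)$ is assumed finite. A knock sequence $\pi$ is an infinite sequence of door indices, executed in order without any feedback; $\mathbb{T}_{\mathcal{C}}(\pi)$ is the expected number of knocks until all $d$ doors are open. *)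

From HB Require Import structures.
From mathcomp Require Import all_boot all_order all_algebra.
From mathcomp Require Import reals ereal sequences.
Set Implicit Arguments. Unset Strict Implicit. Unset Printing Implicit Defensive.
Import Order.TTheory GRing.Theory Num.Theory.
Local Open Scope ring_scope.

(* Doors are 'I_d (door k of the paper is the ordinal k-1).
   A configuration is phi : forall i : 'I_d, seq {set 'I_d} -> R, where
   phi i [:: X_1; ...; X_n] is the probability that door i has opened
   during n knocks on it, X_j being the set of open doors among the
   predecessors of i at the j-th knock. *)

Section Doors.
Variables (R : realType) (d : nat).

Definition preds (i : 'I_d) : {set 'I_d} := [set j : 'I_d | (j < i)%N].

Definition valid_hist (i : 'I_d) (s : seq {set 'I_d}) : bool :=
  all (fun X : {set 'I_d} => X \subset preds i) s.

Variable phi : forall i : 'I_d, seq {set 'I_d} -> R.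

Definition phi0 (i : 'I_d) (s : seq {set 'I_d}) : R :=
  if s is [::] then 0 else phi i s.

Definition phi_range : Prop :=
  forall i s, valid_hist i s -> s != [::] -> 0 <= phi i s <= 1.

Definition phi_monotone : Prop :=
  forall i s s', valid_hist i s -> subseq s' s -> phi0 i s' <= phi0 i s.

Definition phi_poscorr : Prop :=
  forall i s s', valid_hist i s ->
    all2 (fun X' X : {set 'I_d} => X' \subset X) s' s -> phi0 i s' <= phi0 i s.

Definition fund (i : 'I_d) (n : nat) : R := 1 - phi0 i (nseq n (preds i)).

Definition fund_finite : Prop :=
  forall i : 'I_d, (\sum_(0 <= n <oo) (fund i n)%:E < +oo)%E.

Definition is_configuration : Prop :=
  [/\ phi_range, phi_monotone, phi_poscorr & fund_finite].

Definition knock_seq := nat -> 'I_d.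

(* Transition probability of the k-th knock (k = size past - 1, door pi k),
   given the states past = [:: S_0; ...; S_k] (S_m = set of open doors just
   before knock m), to the next state S'.  If door i = pi k is already open
   nothing changes; otherwise, with hist = (X_1,...,X_n) the sets of open
   predecessors of i at all knocks on i so far (including this one), door i
   opens with conditional probability
   (phi(X_1..X_n) - phi(X_1..X_{n-1})) / (1 - phi(X_1..X_{n-1})).
   (When the denominator is 0 the state has probability 0 anyway.) *)
Definition stepP (pi : knock_seq) (past : seq {set 'I_d}) (S' : {set 'I_d}) : R :=
  let k := (size past).-1 in
  let i := pi k in
  let Sk := last set0 past in
  let hist := [seq nth set0 past m :&: preds i |
               m <- [seq m <- iota 0 (size past) | pi m == i]] in
  let prev := take (size hist).-1 hist in
  let q := (phi0 i hist - phi0 i prev) / (1 - phi0 i prev) in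
  if i \in Sk then (if S' == Sk then 1 else 0)
  else if S' == i |: Sk then q
  else if S' == Sk then 1 - q
  else 0.

(* probability of the trajectory S_1, ..., S_t (with S_0 = set0) *)
Definition trajP (pi : knock_seq) (s : seq {set 'I_d}) : R :=
  \prod_(k < size s) stepP pi (take k.+1 (set0 :: s)) (nth set0 s k).

Definition notAllOpen (pi : knock_seq) (t : nat) : R :=
  \sum_(s : t.-tuple {set 'I_d} | last set0 s != [set: 'I_d]) trajP pi s.

(* expected number of knocks until all doors are open:
   E[tau] = sum_{t >= 0} P(tau > t), in the extended reals *)
Definition expT (pi : knock_seq) : \bar R :=
  (\sum_(0 <= t <oo) (notAllOpen pi t)%:E)%E.

End Doors.

(* The expected time is a series of nonnegative terms whose t-th term only
   depends on the first t knocks. Choose the knocks greedily, each time taking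
   a door for which the infimum of the cost over all sequences extending the
   prefix chosen so far does not increase; a minimizing door exists because
   there are finitely many doors. That infimum then stays below the global
   infimum, and it bounds every partial sum of the greedy sequence, hence
   also the whole series. *)
From HB Require Import structures.
From mathcomp Require Import all_boot all_order all_algebra.
From mathcomp Require Import reals ereal sequences.
From mathcomp Require Import classical_sets.
Set Implicit Arguments. Unset Strict Implicit. Unset Printing Implicit Defensive.
Import Order.TTheory GRing.Theory Num.Theory.
Local Open Scope ring_scope.

Definition agree_upto (T : Type) (n : nat) (f g : nat -> T) : Prop :=
  forall m, (m < n)%N -> f m = g m.

Definition set_at (T : Type) (f : nat -> T) (n : nat) (x : T) : nat -> T :=
  fun m => if m == n then x else f m.

Lemma agree_upto_set_at (T : Type) (n : nat) (f g : nat -> T) :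
  agree_upto n f g -> agree_upto n.+1 (set_at f n (g n)) g.
Proof.
move=> fg m; rewrite ltnS leq_eqVlt /set_at.
by case: eqVneq => [-> //|_ /= ltmn]; exact: fg.
Qed.

Section OptimalSequence.
Local Open Scope ereal_scope.
Local Open Scope classical_set_scope.
Variables (R : realType) (T : finType) (x0 : T) (c : (nat -> T) -> nat -> R).
Hypothesis c_ge0 : forall f t, (0 <= c f t)%R.
Hypothesis c_local : forall f g t, agree_upto t f g -> c f t = c g t.

Let cost (f : nat -> T) : \bar R := \sum_(0 <= t <oo) (c f t)%:E.

Definition prefix_inf (n : nat) (f : nat -> T) : \bar R :=
  ereal_inf [set cost g | g in agree_upto n f].

Definition best_next (f : nat -> T) (n : nat) : T :=
  Order.arg_min x0 xpredT (fun x => prefix_inf n.+1 (set_at f n x)).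

Fixpoint greedy_prefix (n : nat) : nat -> T :=
  if n is n'.+1 then set_at (greedy_prefix n') n' (best_next (greedy_prefix n') n')
  else fun=> x0.

Definition greedy (m : nat) : T := greedy_prefix m.+1 m.

Lemma prefix_inf_best_next n f :
  prefix_inf n.+1 (set_at f n (best_next f n)) <= prefix_inf n f.
Proof.
apply: le_ereal_inf_tmp => _ [g fg <-].
apply: (@le_trans _ _ (prefix_inf n.+1 (set_at f n (g n)))).
  by rewrite /best_next; case: arg_minP => //= x _; apply.
by apply: ereal_inf_lbound; exists g => //; exact: agree_upto_set_at.
Qed.

Lemma prefix_inf_greedy n :
  prefix_inf n (greedy_prefix n) <= ereal_inf (range cost).
Proof.
elim: n => [|n IH]; last exact: le_trans (prefix_inf_best_next _ _) IH.
by apply: ereal_inf_le_tmp => _ [g _ <-]; exists g.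
Qed.

Lemma greedy_agree n : agree_upto n greedy (greedy_prefix n).
Proof.
elim: n => [//|n IH] m; rewrite ltnS leq_eqVlt /= /set_at.
by case: eqVneq => [-> _|_ /= ltmn]; [rewrite /greedy /= /set_at eqxx | exact: IH].
Qed.

Lemma partial_sum_local n f g : agree_upto n f g ->
  \sum_(0 <= t < n) (c f t)%:E = \sum_(0 <= t < n) (c g t)%:E.
Proof.
move=> fg; apply: eq_big_nat => t /andP[_ ltn]; congr (_%:E).
by apply: c_local => m ltmt; exact/fg/(ltn_trans ltmt).
Qed.

Lemma partial_sum_le_prefix_inf n f :
  \sum_(0 <= t < n) (c f t)%:E <= prefix_inf n f.
Proof.
apply: le_ereal_inf_tmp => _ [g fg <-]; rewrite (partial_sum_local fg).
by apply: nneseries_lim_ge => t _ _; rewrite lee_fin.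
Qed.

Lemma series_argmin_exists : exists f, forall g, cost f <= cost g.
Proof.
exists greedy => g.
apply: (@le_trans _ _ (ereal_inf (range cost))); last first.
  by apply: ereal_inf_lbound; exists g.
have c_greedy_ge0 t : (0 <= t)%N -> xpredT t -> 0 <= (c greedy t)%:E.
  by move=> _ _; rewrite lee_fin.
rewrite /cost; have /cvg_lim -> // :=
  ereal_nondecreasing_cvgn (ereal_nondecreasing_series c_greedy_ge0).
apply: ge_ereal_sup => _ [n _ <-].
rewrite big_mkcond /= (partial_sum_local (@greedy_agree n)).
exact: le_trans (partial_sum_le_prefix_inf _ _) (prefix_inf_greedy n).
Qed.

End OptimalSequence.

Lemma cond_prob_bounds (R : realFieldType) (a b : R) :
  a <= b -> b <= 1 -> 0 <= (b - a) / (1 - a) <= 1.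
Proof.
move=> le_ab le_b1; have [->|nz] := eqVneq (1 - a) 0.
  by rewrite invr0 mulr0 lexx ler01.
have pos : 0 < 1 - a by rewrite lt0r nz subr_ge0 (le_trans le_ab le_b1).
rewrite divr_ge0 ?(ltW pos) ?subr_ge0 //=.
by rewrite ler_pdivrMr // mul1r lerD2r.
Qed.

Section Doors.
Variables (R : realType) (d : nat) (phi : forall i : 'I_d, seq {set 'I_d} -> R).

Lemma stepP_ge0 pi past S' :
  phi_range phi -> phi_monotone phi -> 0 <= stepP phi pi past S'.
Proof.
move=> hr hm; rewrite /stepP.
set i := pi _; set hist := map _ _.
have vh : valid_hist i hist by apply/allP => X /mapP [m _ ->]; rewrite subsetIr.
have le_hist1 : phi0 phi i hist <= 1.
  move: vh; rewrite /phi0; case: hist => [|X s] // vh.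
  by case/andP: (hr i _ vh isT).
set prev := take _ hist.
have le_prev : phi0 phi i prev <= phi0 phi i hist.
  by apply: hm => //; exact: take_subseq.
have /andP[q_ge0 q_le1] := cond_prob_bounds le_prev le_hist1.
by repeat case: ifP => //; rewrite subr_ge0.
Qed.

Lemma notAllOpen_ge0 pi t :
  phi_range phi -> phi_monotone phi -> 0 <= notAllOpen phi pi t.
Proof.
by move=> hr hm; apply: sumr_ge0 => s _; apply: prodr_ge0 => k _; exact: stepP_ge0.
Qed.

Lemma stepP_local (pi pi' : knock_seq d) past S' :
  (0 < size past)%N -> agree_upto (size past) pi pi' ->
  stepP phi pi past S' = stepP phi pi' past S'.
Proof.
move=> past_gt0 pipi'; rewrite /stepP.
have -> : pi (size past).-1 = pi' (size past).-1 by apply: pipi'; rewrite prednK.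
have -> // : [seq m <- iota 0 (size past) | pi m == pi' (size past).-1]
  = [seq m <- iota 0 (size past) | pi' m == pi' (size past).-1].
by apply: eq_in_filter => m; rewrite mem_iota add0n => /andP[_ /pipi' ->].
Qed.

Lemma notAllOpen_local (pi pi' : knock_seq d) t :
  agree_upto t pi pi' -> notAllOpen phi pi t = notAllOpen phi pi' t.
Proof.
move=> pipi'; apply: eq_bigr => s _; apply: eq_bigr => k _.
have ltkt : (k < t)%N by rewrite -{2}(size_tuple s).
have le_k_size : (k <= size s)%N := ltnW (ltn_ord k).
apply: stepP_local; rewrite size_takel //= => m ltmk.
exact/pipi'/(leq_trans ltmk).
Qed.

End Doors.

Theorem mainTheorem8 (R : realType) (d : nat) (hd : (2 <= d)%N)
  (phi : forall i : 'I_d, seq {set 'I_d} -> R) :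
  is_configuration phi ->
  exists pi : knock_seq d,
    forall pi' : knock_seq d, (expT phi pi <= expT phi pi')%E.
Proof.
case=> hr hm _ _.
have door0 : 'I_d := Ordinal (ltnW hd).
apply: (series_argmin_exists door0 (c := notAllOpen phi)).
- by move=> pi t; exact: notAllOpen_ge0.
- by move=> pi pi' t; exact: notAllOpen_local.
Qed.
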